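(* Let $n\ge 4$ and let $\rho=(a^b)$ be a partition of $n$ with $a,b\ge 2$ and $ab=n$ (i.e. $b$ parts all equal to $a$). Then $\rho$ has exactly two neighbors in the partition graph $G_n$, namely \[ \alpha(\rho)=(a+1,a^{\,b-2},a-1)\quad\text{and}\quad \beta(\rho)=(a^{\,b-1},a-1,1), \] where $\alpha(\rho)=(a+1,a-1)$ when $b=2$.
   Context: The partition graph $G_n$ has as vertices the integer partitions of $n$; two partitions are adjacent if one is obtained from the other by a single elementary unit transfer followed by reordering: decrease one part by $1$ and either increase a different part by $1$ or create a new part equal to $1$, then delete a part that became $0$ and sort the parts in nonincreasing order (the result being a partition different from the original). Exponent notation $a^k$ denotes $k$ parts equal to $a$. *)

From mathcomp Require Import all_boot.
Set Implicit Arguments. Unset Strict Implicit. Unset Printing Implicit Defensive.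

Definition is_partition (n : nat) (p : seq nat) : Prop :=
  [/\ sorted geq p, all (fun x => 0 < x) p & sumn p = n].

Definition normalize (s : seq nat) : seq nat := sort geq (filter (fun x => x != 0) s).

Definition decr (p : seq nat) (i : nat) : seq nat := set_nth 0 p i (nth 0 p i).-1.
Definition incr (p : seq nat) (j : nat) : seq nat := set_nth 0 p j (nth 0 p j).+1.

Definition elem_move (p q : seq nat) : Prop :=
  q != p /\
  exists i, i < size p /\
    ((exists j, [/\ j < size p, j != i & q = normalize (incr (decr p i) j)])
     \/ q = normalize (rcons (decr p i) 1)).

Definition adjacent (n : nat) (p q : seq nat) : Prop :=
  [/\ is_partition n p, is_partition n q & (elem_move p q \/ elem_move q p)].

From mathcomp Require Import all_boot zify.

Set Implicit Arguments.
Unset Strict Implicit.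
Unset Printing Implicit Defensive.

(* A move out of (a^b) lowers some part a to a-1 and either raises another
   part a to a+1, giving alpha, or creates a new part 1, giving beta.
   Conversely, let a move carry q to (a^b). It cannot create a part 1, since
   a >= 2. So it raises a part x of q to x+1 = a and lowers a part y to y-1,
   which is either 0 or a; all other parts of q are a. Thus x = a-1 and
   y = a+1 or y = 1, and q is a rearrangement of alpha or of beta.
   Partitions are compared as multisets: two sorted sequences that are
   permutations of each other are equal. *)

Lemma geq_trans : transitive geq.
Proof. exact: rev_trans leq_trans. Qed.

Lemma geq_anti : antisymmetric geq.
Proof. by move=> x y; rewrite andbC => /anti_leq. Qed.

Lemma geq_total : total geq.
Proof. by move=> x y; apply: leq_total. Qed.

Lemma sorted_geq_nseq_cat k x s :
  sorted geq s -> all (geq x) s -> sorted geq (nseq k x ++ s).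
Proof.
move=> s_sorted s_le; elim: k => [|k IHk] //=.
rewrite (path_sortedE geq_trans) IHk all_cat s_le !andbT.
by rewrite all_nseq /= leqnn orbT.
Qed.

Lemma nseq_partition k x : 0 < x -> is_partition (x * k) (nseq k x).
Proof.
move=> x_pos; split; last exact: sumn_nseq.
- by rewrite -[nseq k x]cats0; apply: sorted_geq_nseq_cat.
- by rewrite all_nseq x_pos orbT.
Qed.

Lemma partition_perm_eq n m p q :
  is_partition n p -> is_partition m q -> perm_eq p q -> p = q.
Proof.
by case=> p_sorted _ _ [q_sorted _ _]; apply: (sorted_eq geq_trans geq_anti p_sorted).
Qed.

Lemma filter_partition n p : is_partition n p -> filter (fun x => x != 0) p = p.
Proof.
by case=> _ p_pos _; apply/all_filterP; apply: sub_all p_pos => x; rewrite lt0n.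
Qed.

Lemma mem_normalize s x : (x \in normalize s) = (x != 0) && (x \in s).
Proof. by rewrite mem_sort mem_filter. Qed.

Lemma normalize_perm_partition n s p :
  is_partition n p -> perm_eq s p -> normalize s = p.
Proof.
move=> p_part s_p; case: (p_part) => p_sorted _ _.
apply: (sorted_eq geq_trans geq_anti (sort_sorted geq_total _) p_sorted).
by rewrite perm_sort -(filter_partition p_part) perm_filter.
Qed.

Lemma nth_decr s i k :
  nth 0 (decr s i) k = if k == i then (nth 0 s i).-1 else nth 0 s k.
Proof. exact: nth_set_nth. Qed.

Lemma nth_incr s j k :
  nth 0 (incr s j) k = if k == j then (nth 0 s j).+1 else nth 0 s k.
Proof. exact: nth_set_nth. Qed.

Lemma size_decr s i : i < size s -> size (decr s i) = size s.
Proof. by move=> lt_i; rewrite size_set_nth; apply/maxn_idPr. Qed.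

Lemma size_incr s j : j < size s -> size (incr s j) = size s.
Proof. by move=> lt_j; rewrite size_set_nth; apply/maxn_idPr. Qed.

Lemma perm_set_nth (T : eqType) (x0 x : T) s i : i < size s ->
  perm_eq (nth x0 s i :: set_nth x0 s i x) (x :: s).
Proof.
elim: s i => [|y s IHs] [|i] //= lt_i; first by rewrite (perm_catCA [:: y] [:: x]).
rewrite (perm_catCA [:: _] [:: y]) perm_sym (perm_catCA [:: x] [:: y]) /=.
by rewrite perm_cons perm_sym IHs.
Qed.

Lemma perm_transfer s i j : i < size s -> j < size s -> j != i ->
  perm_eq (nth 0 s i :: nth 0 s j :: incr (decr s i) j)
          ((nth 0 s j).+1 :: (nth 0 s i).-1 :: s).
Proof.
move=> lt_i lt_j ne_ji.
have -> : nth 0 s j = nth 0 (decr s i) j by rewrite nth_decr (negbTE ne_ji).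
apply: (@perm_trans _ (nth 0 s i :: (nth 0 (decr s i) j).+1 :: decr s i)).
  by rewrite perm_cons perm_set_nth ?size_decr.
by rewrite (perm_catCA [:: _] [:: _]) /= perm_cons perm_set_nth.
Qed.

Lemma perm_split s i : i < size s ->
  perm_eq (nth 0 s i :: rcons (decr s i) 1) (1 :: (nth 0 s i).-1 :: s).
Proof.
move=> lt_i; rewrite (perm_rcons 1 (nth 0 s i :: decr s i)) !perm_cons.
exact: perm_set_nth.
Qed.

Section ConstantPartition.

Variables a b : nat.
Hypotheses (a_ge2 : 2 <= a) (b_ge2 : 2 <= b).

Local Notation rho := (nseq b a).
Local Notation alpha := (a.+1 :: nseq (b - 2) a ++ [:: a.-1]).
Local Notation beta := (nseq (b - 1) a ++ [:: a.-1; 1]).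

Lemma alpha_partition : is_partition (a * b) alpha.
Proof.
split.
- rewrite /= path_min_sorted; last by rewrite all_cat all_nseq /=; lia.
  by apply: sorted_geq_nseq_cat => /=; lia.
- by rewrite /= all_cat all_nseq /=; lia.
- by rewrite /= sumn_cat sumn_nseq /=; nia.
Qed.

Lemma beta_partition : is_partition (a * b) beta.
Proof.
split.
- by apply: sorted_geq_nseq_cat => /=; lia.
- by rewrite all_cat all_nseq /=; lia.
- by rewrite sumn_cat sumn_nseq /=; nia.
Qed.

Lemma alpha_neq_beta : alpha <> beta.
Proof. by move/(congr1 size); rewrite /= !size_cat !size_nseq /=; lia. Qed.

Lemma perm_alpha : perm_eq (a :: a :: alpha) (a.+1 :: a.-1 :: rho).
Proof.
case: b b_ge2 => [|[|k]] // _; rewrite !subSS subn0.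
by apply/permP => P; rewrite /= count_cat /=; lia.
Qed.

Lemma perm_beta : perm_eq (a :: beta) (1 :: a.-1 :: rho).
Proof.
case: b b_ge2 => [|[|k]] // _; rewrite subSS subn0.
by apply/permP => P; rewrite /= count_cat /=; lia.
Qed.

Lemma normalize_transfer_rho i j : i < b -> j < b -> j != i ->
  normalize (incr (decr rho i) j) = alpha.
Proof.
move=> lt_i lt_j ne_ji; apply: normalize_perm_partition alpha_partition _.
have := @perm_transfer rho i j; rewrite size_nseq !nth_nseq lt_i lt_j.
move=> /(_ isT isT ne_ji) transfer_perm.
rewrite -2!(perm_cons a); apply: perm_trans transfer_perm _.
by rewrite perm_sym perm_alpha.
Qed.

Lemma normalize_split_rho i : i < b -> normalize (rcons (decr rho i) 1) = beta.
Proof.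
move=> lt_i; apply: normalize_perm_partition beta_partition _.
have := @perm_split rho i; rewrite size_nseq nth_nseq lt_i => /(_ isT) split_perm.
rewrite -(perm_cons a); apply: perm_trans split_perm _.
by rewrite perm_sym perm_beta.
Qed.

Lemma elem_move_rho_alpha : elem_move rho alpha.
Proof.
split.
  by apply/eqP => /(congr1 (fun s => a.+1 \in s)); rewrite mem_head mem_nseq /=; lia.
exists 0; split; first by rewrite size_nseq; lia.
by left; exists 1; split; rewrite ?size_nseq // normalize_transfer_rho //; lia.
Qed.

Lemma elem_move_rho_beta : elem_move rho beta.
Proof.
split.
  by apply/eqP => /(congr1 size); rewrite size_cat !size_nseq /=; lia.
exists 0; split; first by rewrite size_nseq; lia.
by right; rewrite normalize_split_rho //; lia.
Qed.

Lemma elem_move_from_rho q : elem_move rho q -> q = alpha \/ q = beta.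
Proof.
case=> _ [i [+ [[j [+ ne_ji ->]]|->]]]; rewrite size_nseq => lt_i.
  by move=> lt_j; left; apply: normalize_transfer_rho.
by right; apply: normalize_split_rho.
Qed.

Lemma transfer_into_rho n q i j :
    is_partition n q -> i < size q -> j < size q -> j != i ->
    rho = normalize (incr (decr q i) j) ->
  nth 0 q j = a.-1 /\ (nth 0 q i = 1 \/ nth 0 q i = a.+1).
Proof.
move=> q_part lt_i lt_j ne_ji t_rho; set t := incr (decr q i) j in t_rho.
have t_parts k : k < size q -> nth 0 t k != 0 -> nth 0 t k = a.
  move=> lt_k nz_k; have := mem_normalize t (nth 0 t k).
  by rewrite -t_rho nz_k mem_nth ?size_incr ?size_decr // mem_nseq => /andP[_ /eqP].
split.
  by have := t_parts j lt_j; rewrite nth_incr eqxx nth_decr (negbTE ne_ji); lia.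
have q_i_pos : 0 < nth 0 q i by case: q_part => _ /(all_nthP 0) q_pos _; apply: q_pos.
have ne_ij : i != j by rewrite eq_sym.
have := t_parts i lt_i; rewrite nth_incr (negbTE ne_ij) nth_decr eqxx.
by case: eqP => [|_ /(_ isT)]; lia.
Qed.

Lemma elem_move_to_rho n q : is_partition n q -> elem_move q rho -> q = alpha \/ q = beta.
Proof.
move=> q_part [_ [i [lt_i [[j [lt_j ne_ji t_rho]] | split_rho]]]]; last first.
  have : 1 \in rho by rewrite split_rho mem_normalize mem_rcons mem_head.
  by rewrite mem_nseq; lia.
have [q_j q_i] := transfer_into_rho q_part lt_i lt_j ne_ji t_rho.
have t_filter : perm_eq (filter (fun x => x != 0) (incr (decr q i) j)) rho.
  by rewrite t_rho perm_sym perm_sort.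
(* Dropping zeros discards the part emptied by the move when q_i = 1. *)
have := perm_filter (fun x => x != 0) (perm_transfer lt_i lt_j ne_ji).
have [a_nz a1_nz] : a != 0 /\ a.-1 != 0 by lia.
rewrite /= (filter_partition q_part) q_j a1_nz prednK ?lt0n //.
case: q_i => -> /= perm_q; [right | left].
- apply: (partition_perm_eq q_part beta_partition).
  rewrite -(perm_cons a) perm_sym; apply: perm_trans perm_beta _.
  by rewrite -(permPr perm_q) !perm_cons perm_sym.
- rewrite a_nz in perm_q.
  apply: (partition_perm_eq q_part alpha_partition).
  rewrite -2!(perm_cons a) perm_sym; apply: perm_trans perm_alpha _.
  by rewrite -(permPr perm_q) !perm_cons perm_sym.
Qed.

End ConstantPartition.

Theorem lemma3p1 (n a b : nat) :
  4 <= n -> 2 <= a -> 2 <= b -> a * b = n ->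
  let rho := nseq b a in
  let alpha := a.+1 :: nseq (b - 2) a ++ [:: a.-1] in
  let beta := nseq (b - 1) a ++ [:: a.-1; 1] in
  [/\ alpha <> beta, adjacent n rho alpha, adjacent n rho beta &
      forall q : seq nat, adjacent n rho q -> q = alpha \/ q = beta].
Proof.
move=> _ a_ge2 b_ge2 <- rho alpha beta; subst rho alpha beta.
have rho_part : is_partition (a * b) (nseq b a) by apply: nseq_partition; lia.
split.
- exact: alpha_neq_beta.
- by split; [| apply: alpha_partition | left; apply: elem_move_rho_alpha].
- by split; [| apply: beta_partition | left; apply: elem_move_rho_beta].
- move=> q [_ q_part [rho_q | q_rho]].
    exact: elem_move_from_rho.
  exact: elem_move_to_rho q_part q_rho.
Qed.
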